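(* Let $1\leq a\leq n$ be integers and let $p(n)$ denote the number of partitions of $n$ (the number of integer sequences $\lambda_1\geq\lambda_2\geq\dots\geq\lambda_k\geq 1$ with $\sum_{i=1}^k\lambda_i=n$). There exists a family $\mathcal{S}\subseteq 2^{[n]}$ of subsets of $[n]=\{1,\dots,n\}$ with $|\mathcal{S}|\leq p(n)\,a\,(n/a+1)^a$ such that the poset $(\mathcal{S},\subseteq)$ contains every $n$-element poset that does not have an antichain of size $a+1$.
   Context: A poset $(U,\leq)$ contains a poset $(P,\preceq)$ if there is a subset $P'\subseteq U$ such that $(P',\leq)$ (the restriction of $\leq$ to $P'$) is isomorphic to $(P,\preceq)$; i.e. containment is as an induced subposet. An antichain is a set of pairwise incomparable elements. *)

From mathcomp Require Import all_boot all_order all_algebra.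
Set Implicit Arguments. Unset Strict Implicit. Unset Printing Implicit Defensive.

(* A partition with k parts has k <= n and all parts <= n, so we count
   k.-tuples with entries in 'I_n.+1 for each k <= n. *)
Definition is_partition (n : nat) (s : seq nat) : bool :=
  [&& sorted geq s, all (fun x => 0 < x) s & sumn s == n].

Definition partition_count (n : nat) : nat :=
  \sum_(k < n.+1)
     #|[set t : k.-tuple 'I_n.+1 | is_partition n (map val t)]|.

(* A partial order on 'I_n (every n-element poset is isomorphic to one). *)
Definition is_poset (n : nat) (r : rel 'I_n) : Prop :=
  reflexive r /\ antisymmetric r /\ transitive r.

Definition is_antichain (n : nat) (r : rel 'I_n) (A : {set 'I_n}) : Prop :=
  forall x y, x \in A -> y \in A -> x != y -> ~~ r x y /\ ~~ r y x.

Definition contains_poset (n m : nat) (S : {set {set 'I_m}}) (r : rel 'I_n)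
  : Prop :=
  exists f : 'I_n -> {set 'I_m},
    [/\ injective f, forall i, f i \in S &
        forall i j, r i j = (f i \subset f j)].

(* A poset of width at most a is covered by a chains (Dilworth's theorem, via
   Galvin's induction); relabelling the chains, their sizes
   l_0 >= l_1 >= ... form a partition of n.  Cut [n] into consecutive blocks of
   lengths l_i and send x to the union, over i, of the first |C_i meet down(x)|
   elements of block i.  As the C_i are chains, x <= y iff
   |C_i meet down(x)| <= |C_i meet down(y)| for every i, so this is an order
   embedding into subsets of [n].  A fixed partition yields at most
   prod_i (l_i + 1) <= (n/a + 1)^a sets by AM-GM, and there are p(n) partitions. *)

From mathcomp Require Import all_boot all_order all_algebra zify perm.
Set Implicit Arguments. Unset Strict Implicit. Unset Printing Implicit Defensive.

Section Dilworth.

Variables (T : finType) (r : rel T).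
Hypotheses (r_refl : reflexive r) (r_anti : antisymmetric r) (r_trans : transitive r).

Definition antichain (A : {set T}) :=
  [forall x in A, forall y in A, (x != y) ==> ~~ r x y].

Lemma antichainP (A : {set T}) :
  reflect {in A &, forall x y, x != y -> ~~ r x y} (antichain A).
Proof.
apply: (iffP forall_inP) => [H x y xA yA | H x xA].
  by move/forall_inP: (H x xA) => /(_ y yA)/implyP.
by apply/forall_inP => y yA; apply/implyP; apply: H.
Qed.

Definition width (X : {set T}) :=
  \max_(A : {set T} | (A \subset X) && antichain A) #|A|.

Lemma antichain_width (X A : {set T}) : A \subset X -> antichain A -> #|A| <= width X.
Proof. by move=> AX Aac; apply: leq_bigmax_cond; rewrite AX. Qed.

Lemma width_attained (X : {set T}) :
  exists A : {set T}, [/\ A \subset X, antichain A & #|A| = width X].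
Proof.
have P0 : (set0 \subset X) && antichain set0.
  by rewrite sub0set; apply/antichainP => x y; rewrite inE.
rewrite /width (bigmax_eq_arg (P := fun A : {set T} => (A \subset X) && antichain A) _ P0).
by case: arg_maxnP => // A /andP[AX Aac] _; exists A.
Qed.

Lemma width_subset (X Y : {set T}) : X \subset Y -> width X <= width Y.
Proof.
move=> XY; have [A [AX Aac <-]] := width_attained X.
exact: antichain_width (subset_trans AX XY) Aac.
Qed.

Definition chain_coloring (X : {set T}) (m : nat) (f : T -> nat) :=
  {in X, forall x, f x < m} /\ {in X &, forall x y, f x = f y -> r x y || r y x}.

Lemma chain_coloringW (X : {set T}) m m' f :
  m <= m' -> chain_coloring X m f -> chain_coloring X m' f.
Proof. by move=> le_mm' [fm fc]; split=> // x xX; apply: leq_trans (fm x xX) _. Qed.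

Lemma chain_coloring_extend (X K : {set T}) m h :
  K \subset X -> {in K &, forall x y, r x y || r y x} ->
  chain_coloring (X :\: K) m h ->
  chain_coloring X m.+1 (fun x => if x \in K then m else h x).
Proof.
move=> KX Kchain [hm hc]; have XK x : x \in X -> x \notin K -> x \in X :\: K.
  by move=> xX xK; rewrite inE xK.
split=> [x xX | x y xX yX]; first by case: ifP => // /negbT/(XK x xX)/hm/ltnW.
case: ifP => xK; case: ifP => yK; first by move=> _; apply: Kchain.
- by move=> e; have := hm y (XK y yX (negbT yK)); rewrite -e ltnn.
- by move=> e; have := hm x (XK x xX (negbT xK)); rewrite e ltnn.
- by apply: hc; apply: XK => //; apply: negbT.
Qed.

Lemma exists_maximal (X : {set T}) : X != set0 ->
  exists2 a, a \in X & {in X, forall y, r a y -> y = a}.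
Proof.
case/set0Pn=> x0 x0X.
case: (arg_maxnP (fun x => #|[set y in X | r y x]|) x0X) => a aX amax.
exists a => // y yX ray; apply/eqP/negPn/negP => nya.
have := amax y yX; apply/negP; rewrite -ltnNge; apply: proper_card.
apply/properP; split.
  by apply/subsetP => z; rewrite !inE => /andP[-> rza]; apply: r_trans ray.
exists y; first by rewrite inE yX r_refl.
rewrite inE yX /=; apply/negP => rya; case/negP: nya.
by apply/eqP; apply: r_anti; rewrite ray rya.
Qed.

Lemma exists_top (K : {set T}) : K != set0 -> {in K &, forall x y, r x y || r y x} ->
  exists2 t, t \in K & {in K, forall z, r z t}.
Proof.
move=> K0 Kchain; have [t tK tmax] := exists_maximal K0.
exists t => // z zK; case/orP: (Kchain z t zK tK) => // rtz.
by rewrite (tmax z zK rtz) r_refl.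
Qed.

(* Either the top of some M i is below a, and
   then removing a with the elements of colour i below a lowers the width, or
   the tops of the M i together with a form an antichain of size k + 1. *)
Section WidthDrop.

Variables (X : {set T}) (a : T) (g : T -> nat).
Hypotheses (aX : a \in X) (a_max : {in X, forall y, r a y -> y = a}).
Hypothesis g_col : chain_coloring (X :\ a) (width (X :\ a)) g.

Let X' := X :\ a.
Let k := width X'.
Let M i := [set z in X' | (g z == i) &&
  [exists A : {set T}, [&& A \subset X', antichain A, #|A| == k & z \in A]]].

Lemma max_antichain_meets_class (A : {set T}) i :
  A \subset X' -> antichain A -> #|A| = k -> i < k -> exists2 z, z \in A & z \in M i.
Proof.
move=> AX' Aac Ak ik; have [gk gc] := g_col.
have g_inj : {in A &, injective g}.
  move=> x y xA yA gxy; apply/eqP/negPn/negP => nxy; move/antichainP: Aac => Aac.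
  have := gc x y (subsetP AX' x xA) (subsetP AX' y yA) gxy.
  by rewrite (negbTE (Aac x y xA yA nxy)) (negbTE (Aac y x yA xA _)) // eq_sym.
have g_uniq : uniq (map g (enum A)).
  by rewrite map_inj_in_uniq ?enum_uniq // => x y; rewrite !mem_enum; apply: g_inj.
have g_sub : {subset map g (enum A) <= iota 0 k}.
  move=> j /mapP[z]; rewrite mem_enum mem_iota => zA ->.
  exact: gk (subsetP AX' z zA).
have g_size : size (iota 0 k) <= size (map g (enum A)).
  by rewrite size_iota size_map -cardE Ak.
have [_ g_onto] := uniq_min_size g_uniq g_sub g_size.
have : i \in map g (enum A) by rewrite g_onto mem_iota.
case/mapP => z; rewrite mem_enum => zA gz; exists z => //.
apply/setIdP; split; first exact: subsetP AX' z zA.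
rewrite gz eqxx /=.
by apply/existsP; exists A; rewrite AX' Aac Ak eqxx zA.
Qed.

Let top i := odflt a [pick t in M i | [forall z in M i, r z t]].

Lemma top_spec i : i < k -> top i \in M i /\ {in M i, forall z, r z (top i)}.
Proof.
move=> ik; rewrite /top; case: pickP => [t /andP[tM /forall_inP tt] | none] //=.
have [A [AX' Aac Ak]] := width_attained X'.
have [z zA zM] := max_antichain_meets_class AX' Aac Ak ik.
have [t tM tt] : exists2 t, t \in M i & {in M i, forall z, r z t}.
  apply: exists_top => [|x y]; first by apply/set0Pn; exists z.
  move=> /setIdP[xX' /andP[/eqP gx _]] /setIdP[yX' /andP[/eqP gy _]].
  by apply: g_col.2 => //; rewrite gx gy.
by move: (none t); rewrite tM (_ : [forall z in M i, r z t]) //; apply/forall_inP.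
Qed.

Lemma top_color i : i < k -> top i \in X' /\ g (top i) = i.
Proof. by case/top_spec=> /setIdP[? /andP[/eqP]]. Qed.

Lemma width_gt_tops_not_below : (forall i, i < k -> ~~ r (top i) a) -> k < width X.
Proof.
move=> not_below; pose B := [set top j | j : 'I_k].
have BX' x : x \in B -> x \in X' by case/imsetP=> j _ ->; case: (top_color (ltn_ord j)).
have card_B : #|B| = k.
  rewrite card_imset ?card_ord // => j1 j2 e; apply: val_inj => /=.
  by rewrite -(top_color (ltn_ord j1)).2 -(top_color (ltn_ord j2)).2 e.
have aB : a \notin B by apply/negP => /BX'; rewrite !inE eqxx.
have aB_sub : a |: B \subset X.
  by apply/subsetP=> x; rewrite in_setU1 => /predU1P[-> // | /BX'/setD1P[]].
have aB_ac : antichain (a |: B).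
  apply/antichainP => x y; rewrite !in_setU1.
  case/predU1P=> [-> | /imsetP[j1 _ ->]]; case/predU1P=> [-> | yB]; rewrite ?eqxx //.
  - move=> ay; apply/negP => ray; have /setD1P[ya yX] := BX' y yB.
    by move: ya; rewrite (a_max yX ray) eqxx.
  - by move=> _; apply: not_below.
  case/imsetP: yB => j2 _ -> nj; apply/negP => r12.
  have [/setIdP[_ /andP[_ /existsP[A /and4P[AX' Aac /eqP Ak Aj2]]]] _] :=
    top_spec (ltn_ord j2).
  have [z zA zM] := max_antichain_meets_class AX' Aac Ak (ltn_ord j1).
  have rz := r_trans ((top_spec (ltn_ord j1)).2 z zM) r12.
  have nz : z != top j2.
    apply: contraNneq nj => ez; apply/eqP; congr top; apply/eqP.
    move: zM => /setIdP[_ /andP[/eqP <- _]].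
    by rewrite ez (top_color (ltn_ord j2)).2.
  by move/antichainP: Aac => /(_ z _ zA Aj2 nz); rewrite rz.
by have := antichain_width aB_sub aB_ac; rewrite cardsU1 aB card_B.
Qed.

Lemma remove_chain_below_width_lt i :
  i < k -> r (top i) a ->
  let K := a |: [set z in X' | (g z == i) && r z a] in
  {in K &, forall x y, r x y || r y x} /\ width (X :\: K) < k.
Proof.
move=> ik rta K; have [gk gc] := g_col.
have Kcase z : z \in K -> z = a \/ [/\ z \in X', g z = i & r z a].
  by rewrite in_setU1 => /predU1P[-> | /setIdP[zX' /andP[/eqP gz rza]]]; [left | right].
split=> [x y /Kcase[-> | [xX' gx rxa]] /Kcase[-> | [yX' gy rya]] | ].
- by rewrite r_refl.
- by rewrite rya orbT.
- by rewrite rxa.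
- by apply: gc => //; rewrite gx gy.
have YX' : X :\: K \subset X'.
  apply/subsetP=> z /setDP[zX zK]; rewrite !inE zX andbT.
  by apply: contraNneq zK => ->; apply: setU11.
rewrite ltn_neqAle width_subset // andbT; apply/eqP => eq_k.
have [B [BY Bac Bk]] := width_attained (X :\: K).
have [z zB zM] :=
  max_antichain_meets_class (subset_trans BY YX') Bac (etrans Bk eq_k) ik.
have zK : z \in K.
  move: (zM) => /setIdP[zX' /andP[/eqP gz _]].
  by rewrite in_setU1 inE zX' gz eqxx (r_trans ((top_spec ik).2 z zM) rta) orbT.
by move: (subsetP BY z zB); rewrite inE zK.
Qed.

Lemma exists_chain_width_drop : exists K : {set T},
  [/\ a \in K, K \subset X, {in K &, forall x y, r x y || r y x} & width (X :\: K) < width X].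
Proof.
have k_le : k <= width X by apply: width_subset; apply: subsetDl.
case: (boolP [exists i : 'I_k, r (top i) a]) =>
  [/existsP[[i ik] rta] | /existsPn not_below].
  have [Kchain lt_k] := remove_chain_below_width_lt ik rta.
  exists (a |: [set z in X' | (g z == i) && r z a]); split=> //; first exact: setU11.
    by apply/subsetP => z; rewrite in_setU1 => /predU1P[-> // | /setIdP[/setD1P[]]].
  exact: leq_trans lt_k k_le.
exists [set a]; split; rewrite ?set11 ?sub1set //.
  by move=> x y /set1P-> /set1P->; rewrite r_refl.
by apply: width_gt_tops_not_below => i ik; apply: not_below (Ordinal ik).
Qed.

End WidthDrop.

Theorem dilworth (X : {set T}) : exists f, chain_coloring X (width X) f.
Proof.
move: {2}#|X| (leqnn #|X|) => N; elim: N X => [|N IH] X XN;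
  have [-> | X0] := eqVneq X set0; try by exists (fun=> 0); split=> x; rewrite inE.
  by move: XN; rewrite leqn0 cards_eq0 (negbTE X0).
have [a aX a_max] := exists_maximal X0.
have smaller (K : {set T}) : a \in K -> #|X :\: K| <= N.
  move=> aK; rewrite -ltnS; apply: leq_trans XN; apply: proper_card.
  by apply/properP; split; [apply: subsetDl | exists a; rewrite ?inE ?aK].
have [g g_col] := IH (X :\ a) (smaller _ (set11 a)).
have [K [aK KX Kchain drop]] := exists_chain_width_drop aX a_max g_col.
have [h h_col] := IH (X :\: K) (smaller K aK).
exists (fun x => if x \in K then width (X :\: K) else h x).
exact: chain_coloringW drop (chain_coloring_extend KX Kchain h_col).
Qed.

End Dilworth.

Lemma sum_nat_of_bool_card (T : finType) (P : pred T) :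
  \sum_x (P x : nat) = #|[set x | P x]|.
Proof. by rewrite -sum1dep_card [RHS]big_mkcond; apply: eq_bigr => x _; case: (P x). Qed.

Lemma sum_card_classes (T I : finType) (c : T -> I) :
  \sum_(i : I) #|[set x | c x == i]| = #|T|.
Proof.
rewrite -sum1_card (partition_big c predT) //=; apply: eq_bigr => i _.
by rewrite sum1dep_card.
Qed.

Lemma exists_perm_sorted_classes (T : finType) a (c : T -> 'I_a) :
  exists s : {perm 'I_a}, forall i j : 'I_a,
    i <= j -> #|[set x | s (c x) == j]| <= #|[set x | s (c x) == i]|.
Proof.
have [s _ s_min] :=
  @arg_minnP _ (1%g : {perm 'I_a}) predT (fun s => \sum_x val (s (c x))) isT.
exists s => i j; rewrite leq_eqVlt => /orP[/eqP/val_inj-> // | lt_ij].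
rewrite leqNgt; apply/negP => lt_cls.
pose s' := (s * tperm i j)%g.
have swap x : val (s' (c x)) + (j - i) * (s (c x) == j)
              = val (s (c x)) + (j - i) * (s (c x) == i).
  rewrite permM; have ne_ij : i != j by rewrite neq_ltn lt_ij.
  have ij_sub : i + (j - i) = j by rewrite subnKC // ltnW.
  case: tpermP => [-> | -> | /eqP ni /eqP nj].
  - by rewrite eqxx (negbTE ne_ij) muln0 muln1 addn0 ij_sub.
  - by rewrite eqxx eq_sym (negbTE ne_ij) muln0 muln1 addn0 ij_sub.
  - by rewrite (negbTE ni) (negbTE nj).
have := s_min s' isT; rewrite leqNgt; apply/negP.
have sums : \sum_x val (s' (c x)) + (j - i) * #|[set x | s (c x) == j]|
          = \sum_x val (s (c x)) + (j - i) * #|[set x | s (c x) == i]|.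
  by rewrite -!sum_nat_of_bool_card !big_distrr -!big_split; apply: eq_bigr => x _; apply: swap.
have : (j - i) * #|[set x | s (c x) == i]| < (j - i) * #|[set x | s (c x) == j]|.
  by rewrite ltn_pmul2l // subn_gt0.
lia.
Qed.

Lemma exists_sorted_chain_coloring (T : finType) (r : rel T) a :
  reflexive r -> antisymmetric r -> transitive r -> width r [set: T] <= a ->
  exists c : T -> 'I_a, (forall x y, c x = c y -> r x y || r y x) /\
    {homo (fun i => #|[set x | (c x : nat) == i]|) : i j /~ i <= j}.
Proof.
move=> r_refl r_anti r_trans w_le.
have [f [f_lt f_chain]] := dilworth r_refl r_anti r_trans [set: T].
pose c0 x : 'I_a := Ordinal (leq_trans (f_lt x (in_setT x)) w_le).
have [p p_sorted] := exists_perm_sorted_classes c0.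
exists (fun x => p (c0 x)); split.
  by move=> x y /perm_inj/(congr1 val) /= e; apply: f_chain; rewrite ?in_setT.
move=> i j le_ji; case: (ltnP i a) => [ia | ai].
  exact: (p_sorted (Ordinal (leq_ltn_trans le_ji ia)) (Ordinal ia) le_ji).
rewrite (_ : [set x | _ == i] = set0) ?cards0 //.
by apply/setP => x; rewrite !inE ltn_eqF // (leq_trans (ltn_ord _) ai).
Qed.

Section Blocks.

Variable s : nat -> nat.

Definition block_start i := \sum_(0 <= l < i) s l.

Lemma block_startS i : block_start i.+1 = block_start i + s i.
Proof. by rewrite /block_start big_nat_recr. Qed.

Lemma block_start_le i j : i <= j -> block_start i <= block_start j.
Proof. by move=> le_ij; rewrite /block_start (big_cat_nat (leq0n i) le_ij) leq_addr. Qed.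

Lemma block_index_unique i i' j :
  block_start i <= j < block_start i + s i ->
  block_start i' <= j < block_start i' + s i' -> i = i'.
Proof.
wlog lt_ii' : i i' / i < i'.
  move=> wlog_lt Hi Hi'; case: (ltngtP i i') => [lt | lt | //].
  - exact: wlog_lt Hi Hi'.
  - by apply/esym; apply: wlog_lt Hi' Hi.
rewrite -block_startS => /andP[_ lt_j] /andP[le_j _].
by have := block_start_le lt_ii'; lia.
Qed.

Variables (n a : nat).

Definition block_set (u : 'I_a -> nat) : {set 'I_n} :=
  [set j : 'I_n | [exists i : 'I_a, block_start i <= j < block_start i + u i]].

Lemma block_set_subset (u v : 'I_a -> nat) :
  block_start a <= n -> (forall i, u i <= s i) -> (forall i, v i <= s i) ->
  (block_set u \subset block_set v) = [forall i, u i <= v i].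
Proof.
move=> le_n us vs; apply/idP/forallP => [sub_uv i | le_uv]; last first.
  apply/subsetP => j; rewrite !inE => /existsP[i /andP[le_j lt_j]].
  by apply/existsP; exists i; rewrite le_j (leq_trans lt_j) // leq_add2l.
rewrite leqNgt; apply/negP => lt_vu.
have lt_n : block_start i + v i < n.
  apply: leq_trans le_n; apply: leq_trans (block_start_le (ltn_ord i)).
  by rewrite block_startS ltn_add2l (leq_trans lt_vu).
have : Ordinal lt_n \in block_set u.
  by rewrite inE; apply/existsP; exists i; rewrite /= leq_addr ltn_add2l.
move/(subsetP sub_uv); rewrite inE => /existsP[i' /= /andP[le_j lt_j]].
have ii' : val i = val i'.
  apply: (@block_index_unique _ _ (block_start i + v i)).
    by rewrite leq_addr ltn_add2l (leq_trans lt_vu).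
  by rewrite le_j (leq_trans lt_j) // leq_add2l.
by move: lt_j; rewrite -(val_inj ii') ltnn.
Qed.

Definition block_family : {set {set 'I_n}} :=
  [set block_set (fun i => w i) | w : {ffun 'I_a -> 'I_n.+1}
     in family (fun i : 'I_a => [pred m : 'I_n.+1 | m <= s i])].

Lemma block_set_in_family (u : 'I_a -> nat) :
  (forall i, u i <= s i) -> (forall i, u i <= n) -> block_set u \in block_family.
Proof.
move=> us un; apply/imsetP; exists [ffun i => inord (u i)].
  by apply/familyP => i; rewrite inE ffunE inordK ?ltnS.
by apply/setP => j; rewrite !inE; apply: eq_existsb => i; rewrite ffunE inordK ?ltnS.
Qed.

Lemma card_block_family : #|block_family| <= \prod_(i < a) (s i).+1.
Proof.
apply: leq_trans (leq_imset_card _ _) _.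
rewrite card_family foldrE big_map big_enum /=; apply: leq_prod => i _.
rewrite cardE -(size_iota 0 (s i).+1) -(size_map val); apply: uniq_leq_size.
  by rewrite map_inj_uniq ?enum_uniq //; apply: val_inj.
by move=> m /mapP[m' m'_le ->]; move: m'_le; rewrite mem_enum mem_iota ltnS.
Qed.

End Blocks.

Section CountBelow.

Variables (T I : finType) (r : rel T) (c : T -> I).
Hypotheses (r_refl : reflexive r) (r_trans : transitive r).
Hypothesis c_chain : forall x y, c x = c y -> r x y || r y x.

Definition count_below x i := #|[set y | (c y == i) && r y x]|.

Lemma count_below_le_class x i : count_below x i <= #|[set y | c y == i]|.
Proof. by apply: subset_leq_card; apply/subsetP => y; rewrite !inE => /andP[]. Qed.

Lemma le_count_below x y : r x y = [forall i, count_below x i <= count_below y i].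
Proof.
apply/idP/forallP => [rxy i | le_xy].
  apply: subset_leq_card; apply/subsetP => z; rewrite !inE => /andP[-> rzx].
  exact: r_trans rzx rxy.
apply/negPn/negP => nrxy; move: (le_xy (c x)); apply/negP; rewrite -ltnNge.
apply: proper_card; apply/properP; split.
  apply/subsetP => z; rewrite !inE => /andP[/eqP cz rzy]; rewrite cz eqxx.
  case/orP: (c_chain cz) => // rxz; case/negP: nrxy; exact: r_trans rxz rzy.
by exists x; rewrite !inE eqxx ?r_refl //= (negbTE nrxy).
Qed.

End CountBelow.

Section ChainEmbedding.

Variables (n a : nat) (r : rel 'I_n) (c : 'I_n -> 'I_a) (s : nat -> nat).
Hypotheses (r_refl : reflexive r) (r_trans : transitive r).
Hypothesis c_chain : forall x y, c x = c y -> r x y || r y x.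
Hypothesis s_class : forall i : 'I_a, s i = #|[set x | c x == i]|.

Definition chain_embedding x := block_set s n (count_below r c x).

Lemma chain_embedding_subset x y :
  r x y = (chain_embedding x \subset chain_embedding y).
Proof.
have count_le z i : count_below r c z i <= s i by rewrite s_class count_below_le_class.
rewrite (le_count_below r_refl r_trans c_chain) block_set_subset //.
by rewrite /block_start big_mkord (eq_bigr _ (fun i _ => s_class i)) sum_card_classes card_ord.
Qed.

Lemma chain_embedding_in_family x : chain_embedding x \in block_family s n a.
Proof.
apply: block_set_in_family => i; first by rewrite s_class count_below_le_class.
apply: leq_trans (count_below_le_class _ _ _ _) _.
exact: leq_trans (max_card _) (eq_leq (card_ord n)).
Qed.

End ChainEmbedding.

Lemma partition_of_nonincreasing n m (s : nat -> nat) :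
  {homo s : i j /~ i <= j} -> s m = 0 -> \sum_(i < m) s i = n ->
  exists l, is_partition n l /\ forall i, nth 0 l i = s i.
Proof.
move=> s_mono sm0 s_sum.
have ex0 : exists i, s i == 0 by exists m; rewrite sm0.
have [k /eqP sk0 k_min] := ex_minnP ex0.
have km : k <= m by apply: k_min; rewrite sm0.
have s_pos i : i < k -> 0 < s i.
  by move=> ik; rewrite lt0n; apply: contraTN ik => /k_min; rewrite leqNgt.
have s_zero i : k <= i -> s i = 0.
  by move=> ki; apply/eqP; rewrite -leqn0 -sk0 s_mono.
exists (map s (iota 0 k)); split; last first.
  move=> i; case: (ltnP i k) => ik; first by rewrite (nth_map 0) ?nth_iota ?size_iota.
  by rewrite nth_default ?size_map ?size_iota ?s_zero.
apply/and3P; split.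
- by apply: (homo_sorted (e := leq)) (iota_sorted 0 k) => i j; apply: s_mono.
- by apply/allP => x /mapP[i]; rewrite mem_iota => /andP[_ ik] ->; apply: s_pos.
have -> : iota 0 k = index_iota 0 k by rewrite /index_iota subn0.
rewrite sumnE big_map -s_sum -(big_mkord xpredT).
rewrite (big_cat_nat (leq0n k) km) /= [X in _ + X]big1_seq ?addn0 // => i /=.
by rewrite mem_index_iota => /andP[ki _]; apply: s_zero.
Qed.

Lemma partition_tuple n l : is_partition n l ->
  exists (k : 'I_n.+1) (t : k.-tuple 'I_n.+1), map val t = l.
Proof.
case/and3P => _ /allP l_pos /eqP l_sum.
have le_n x : x \in l -> x <= n by move=> xl; rewrite -l_sum sumnE (big_rem x) ?leq_addr.
have size_lt : size l < n.+1.
  rewrite ltnS -l_sum -sum1_size sumnE big_seq [X in _ <= X]big_seq.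
  by apply: leq_sum => x /l_pos.
have size_t : size (map (@inord n) l) == Ordinal size_lt by rewrite size_map.
exists (Ordinal size_lt), (Tuple size_t); rewrite /= -map_comp.
by apply: map_id_in => x xl /=; rewrite inordK // ltnS le_n.
Qed.

Definition partition_tuples n k := [set t : k.-tuple 'I_n.+1 | is_partition n (map val t)].

Definition partition_block_family n a : {set {set 'I_n}} :=
  \bigcup_(k < n.+1) \bigcup_(t in partition_tuples n k) block_family (nth 0 (map val t)) n a.

Lemma block_family_sub_partition n a l : is_partition n l ->
  block_family (nth 0 l) n a \subset partition_block_family n a.
Proof.
move=> l_part; have [k [t tl]] := partition_tuple l_part.
apply/subsetP => B B_in; apply/bigcupP; exists k => //; apply/bigcupP; exists t.
  by rewrite inE tl.
by rewrite tl.
Qed.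

Lemma contains_width_bounded n a (r : rel 'I_n) :
  is_poset r -> width r [set: 'I_n] <= a -> contains_poset (partition_block_family n a) r.
Proof.
move=> [r_refl [r_anti r_trans]] w_le.
have [c [c_chain c_sorted]] := exists_sorted_chain_coloring r_refl r_anti r_trans w_le.
have class_a : #|[set x | (c x : nat) == a]| = 0.
  by apply/eqP; rewrite cards_eq0; apply/eqP/setP => x; rewrite !inE ltn_eqF.
have [l [l_part l_class]] :=
  partition_of_nonincreasing c_sorted class_a (etrans (sum_card_classes c) (card_ord n)).
have emb :=
  chain_embedding_subset r_refl r_trans c_chain (s := nth 0 l) (fun i => l_class i).
exists (chain_embedding r c (nth 0 l)); split=> // [x y e | x].
  by apply: r_anti; rewrite !emb e subxx.
apply: (subsetP (block_family_sub_partition a l_part)).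
by apply: chain_embedding_in_family => i; apply: l_class.
Qed.

Lemma card_bigcup_le (I T : finType) (P : pred I) (F : I -> {set T}) :
  #|\bigcup_(i | P i) F i| <= \sum_(i | P i) #|F i|.
Proof.
apply: (big_ind2 (fun (X : {set T}) m => #|X| <= m)); rewrite ?cards0 //.
by move=> X1 m1 X2 m2 le1 le2; apply: leq_trans (leq_card_setU _ _) (leq_add le1 le2).
Qed.

Lemma sum_nth_le_sumn (l : seq nat) m : \sum_(i < m) nth 0 l i <= sumn l.
Proof.
elim: l m => [|x l IH] [|m] /=; rewrite ?big_ord0 //.
  by rewrite big1 // => i _; rewrite nth_nil.
by rewrite big_ord_recl leq_add2l.
Qed.

Import Order.TTheory GRing.Theory Num.Theory.
Local Open Scope ring_scope.

Lemma prod_succ_le_AGM (F : numFieldType) m n (s : 'I_m -> nat) :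
  (0 < m)%N -> (\sum_(i < m) s i <= n)%N ->
  (\prod_(i < m) (s i).+1)%:R <= (n%:R / m%:R + 1 : F) ^+ m.
Proof.
move=> m_gt0 le_sum; rewrite natr_prod.
have := (@leif_AGM F 'I_m 'I_m (fun i => ((s i).+1)%:R) (fun i _ => ler0n _ _)).1.
rewrite card_ord => /le_trans; apply; apply: lerXn2r.
- by rewrite nnegrE divr_ge0 // sumr_ge0.
- by rewrite nnegrE addr_ge0 // divr_ge0.
have m_pos : (0 : F) < m%:R by rewrite ltr0n.
have -> : n%:R / m%:R + 1 = (n + m)%:R / m%:R :> F.
  by rewrite natrD mulrDl divff // lt0r_neq0.
rewrite ler_pM2r ?invr_gt0 // -natr_sum ler_nat.
under eq_bigr => i _ do rewrite -addn1.
by rewrite big_split sum_nat_const card_ord muln1 leq_add2r.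
Qed.

Lemma card_partition_block_family n a : (0 < a)%N ->
  (#|partition_block_family n a|%:R : rat) <=
    (partition_count n)%:R * (n%:R / a%:R + 1) ^+ a.
Proof.
move=> a_gt0; set B : rat := _ ^+ a.
have card_le : (#|partition_block_family n a| <=
    \sum_(k < n.+1) \sum_(t in partition_tuples n k) \prod_(i < a) (nth 0 (map val t) i).+1)%N.
  apply: leq_trans (card_bigcup_le _ _) _; apply: leq_sum => k _.
  apply: leq_trans (card_bigcup_le _ _) _; apply: leq_sum => t _.
  exact: card_block_family.
apply: le_trans (_ : _ <= \sum_(k < n.+1) \sum_(t in partition_tuples n k) B) _.
  rewrite -(ler_nat rat) natr_sum in card_le; apply: le_trans card_le _.
  apply: ler_sum => k _; rewrite natr_sum; apply: ler_sum => t.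
  rewrite inE => /and3P[_ _ /eqP t_sum]; apply: prod_succ_le_AGM => //.
  by rewrite -[X in (_ <= X)%N]t_sum sum_nth_le_sumn.
rewrite /partition_count natr_sum mulr_suml; apply: ler_sum => k _.
by rewrite sumr_const mulr_natl.
Qed.

Theorem lemma3p1 (n a : nat) (ha1 : (1 <= a)%N) (han : (a <= n)%N) :
  exists S : {set {set 'I_n}},
    ((#|S|)%:R : rat) <= (partition_count n)%:R * a%:R * ((n%:R / a%:R + 1) ^+ a)
    /\ forall r : rel 'I_n,
         is_poset r ->
         (forall A : {set 'I_n}, is_antichain r A -> (#|A| <= a)%N) ->
         contains_poset S r.
Proof.
exists (partition_block_family n a); split.
  apply: le_trans (card_partition_block_family n ha1) _.
  rewrite mulrAC ler_peMr ?ler1n // mulr_ge0 // exprn_ge0 // addr_ge0 // divr_ge0 //.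
move=> r r_poset r_width; apply: contains_width_bounded => //.
apply/bigmax_leqP => A /andP[_ /antichainP A_ac]; apply: r_width => x y xA yA nxy.
by split; apply: A_ac => //; rewrite eq_sym.
Qed.
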